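(* Let $\mathbb{X}$ be a finite set and let $G=(G(x,y))_{x,y\in\mathbb{X}}$ be a real symmetric, conditionally positive semi-definite matrix which has an equilibrium measure $\nu^*\in\mathcal{P}_+$. Let $\{a_k\}_{k=0}^\infty$ be a Leja sequence with respect to $G$, and for $n\ge 1$ let $\sigma_n=\frac1n\sum_{j=0}^{n-1}\delta_{a_j}$. Let $M=\max_{x\in\mathbb{X}}|G(x,x)|$. Then for every integer $n\ge 1$, $$G(\sigma_n-\nu^*,\sigma_n-\nu^* )\le \frac{1}{n}\left(M-G(\nu^*,\nu^* )\right).$$ Moreover, any weak-star limit of a subsequence of $\{\sigma_n\}$ is also an equilibrium measure for $G$.
   Context: Functions $\nu:\mathbb{X}\to\mathbb{R}$ are identified with measures/vectors on $\mathbb{X}$; $\delta_a$ is the Dirac measure at $a$. For such $\mu,\nu$ write $G(x,\nu)=\sum_{y}G(x,y)\nu(y)$ and $G(\mu,\nu)=\sum_{x,y}G(x,y)\mu(x)\nu(y)$. $\mathcal{P}$ is the set of probability measures on $\mathbb{X}$, and $\mathcal{P}_+$ the set of $\nu\in\mathcal{P}$ with $\nu(x)>0$ for all $x$. $G$ is conditionally positive semi-definite if $v^\intercal Gv\ge 0$ whenever $\sum_x v(x)=0$. A measure $\nu^*\in\mathcal{P}$ is an equilibrium measure for $G$ if $G(\nu^*,\nu^* )=\min_{\nu\in\mathcal{P}}G(\nu,\nu)$. A Leja sequence with respect to $G$ is a sequence $\{a_k\}_{k=0}^\infty$ in $\mathbb{X}$ ($a_0$ arbitrary) such that for each $k\ge1$,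 $a_k$ minimizes $x\mapsto\sum_{j=0}^{k-1}G(x,a_j)$ over $\mathbb{X}$ (ties broken arbitrarily; points may repeat). *)

From HB Require Import structures.
From mathcomp Require Import all_boot all_order all_algebra.
From mathcomp Require Import all_classical all_reals all_analysis.
Set Implicit Arguments. Unset Strict Implicit. Unset Printing Implicit Defensive.
Import Order.TTheory GRing.Theory Num.Theory.
Local Open Scope ring_scope.

Section Defs.
Variables (R : realType) (T : finType).

Definition Gpt (G : T -> T -> R) (x : T) (nu : T -> R) : R :=
  \sum_(y : T) G x y * nu y.

Definition Gform (G : T -> T -> R) (mu nu : T -> R) : R :=
  \sum_(x : T) \sum_(y : T) G x y * mu x * nu y.

Definition is_prob (nu : T -> R) : Prop :=
  (forall x, 0 <= nu x) /\ \sum_(x : T) nu x = 1.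

Definition is_prob_pos (nu : T -> R) : Prop :=
  (forall x, 0 < nu x) /\ \sum_(x : T) nu x = 1.

Definition symmetric_kernel (G : T -> T -> R) : Prop :=
  forall x y, G x y = G y x.

Definition cond_psd (G : T -> T -> R) : Prop :=
  forall v : T -> R, \sum_(x : T) v x = 0 -> 0 <= Gform G v v.

Definition equilibrium (G : T -> T -> R) (nu : T -> R) : Prop :=
  is_prob nu /\ forall mu, is_prob mu -> Gform G nu nu <= Gform G mu mu.

Definition leja (G : T -> T -> R) (a : nat -> T) : Prop :=
  forall k : nat, (0 < k)%N ->
    forall x : T, \sum_(j < k) G (a k) (a j) <= \sum_(j < k) G x (a j).

Definition dirac_pt (a : T) : T -> R := fun y => (a == y)%:R.

Definition emp_meas (a : nat -> T) (n : nat) : T -> R :=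
  fun y => n%:R^-1 * \sum_(j < n) dirac_pt (a j) y.

Definition diag_max (G : T -> T -> R) : R :=
  \big[Num.max/0]_(x : T) `|G x x|.

End Defs.

From HB Require Import structures.
From mathcomp Require Import all_boot all_order all_algebra.
From mathcomp Require Import all_classical all_reals all_analysis.
From mathcomp Require Import ring lra.
Import Order.TTheory GRing.Theory Num.Theory numFieldNormedType.Exports.
Set Implicit Arguments.
Unset Strict Implicit.
Unset Printing Implicit Defensive.
Local Open Scope classical_set_scope.
Local Open Scope ring_scope.

(* Since the equilibrium measure nu* charges every point, moving a little mass
   from x to y shows that its potential G(., nu* ) is constant, equal to
   W = G(nu*, nu* ); hence G(mu - nu*, mu - nu* ) = G(mu, mu) - W for every
   probability mu.  The Leja point a_n minimises x |-> sum_(j<n) G(x, a_j), so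
   it lies below the nu*-average n W of that function; summing over n bounds
   n^2 G(sigma_n, sigma_n) by n M + n (n - 1) W.  Along a convergent
   subsequence the energy is continuous and the bound (M - W)/n tends to 0,
   so the limit mu satisfies G(mu, mu) <= W. *)

Lemma min_le_prob_mean (R : realType) (T : finType) (nu F : T -> R) x0 :
  is_prob nu -> (forall x, F x0 <= F x) -> F x0 <= \sum_x nu x * F x.
Proof.
move=> [nu_ge0 nu_sum] F_min.
rewrite -[F x0]mul1r -nu_sum mulr_suml.
by apply: ler_sum => x _; rewrite ler_wpM2l.
Qed.

Lemma ge0_of_quadratic_ge0_near0 (R : realFieldType) (b c e : R) :
  0 < e -> (forall t, 0 < t <= e -> 0 <= t * b + t ^+ 2 * c) -> 0 <= b.
Proof.
move=> e_gt0 quad_ge0; rewrite leNgt; apply/negP => b_lt0.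
have c1_gt0 : 0 < `|c| + 1 by rewrite ltr_wpDl.
pose t := Num.min e (- b / (`|c| + 1)).
have t_gt0 : 0 < t by rewrite lt_min e_gt0 divr_gt0 ?oppr_gt0.
have tc_lt : t * c < - b.
  have t_le : t * (`|c| + 1) <= - b.
    by rewrite -ler_pdivlMr // /t ge_min lexx orbT.
  have := ler_wpM2l (ltW t_gt0) (ler_norm c).
  nra.
have := quad_ge0 t; rewrite t_gt0 ge_min lexx /= => /(_ isT).
nra.
Qed.

Lemma cvg_is_prob (R : realType) (T : finType) (f : nat -> T -> R) (mu : T -> R) :
  (forall x, f ^~ x @ \oo --> mu x) -> (\forall k \near \oo, is_prob (f k)) ->
  is_prob mu.
Proof.
move=> f_mu f_prob; have f_sum : (fun k => \sum_x f k x) @ \oo --> \sum_x mu x.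
  by apply: cvg_big => //; exact: add_continuous.
split=> [x|].
  apply: (ler_cvg_to (cvg_cst 0) (f_mu x)).
  by apply: filterS f_prob => k [f_ge0 _]; exact: f_ge0.
apply/le_anti/andP; split.
  apply: (ler_cvg_to f_sum (cvg_cst (1 : R))).
  by apply: filterS f_prob => k [_ ->].
apply: (ler_cvg_to (cvg_cst (1 : R)) f_sum).
by apply: filterS f_prob => k [_ ->].
Qed.

Lemma cvg_Gform (R : realType) (T : finType) (G : T -> T -> R) (I : Type)
    (F : set_system I) {FF : Filter F} (f g : I -> T -> R) (f0 g0 : T -> R) :
  (forall x, f ^~ x @ F --> f0 x) -> (forall x, g ^~ x @ F --> g0 x) ->
  (fun i => Gform G (f i) (g i)) @ F --> Gform G f0 g0.
Proof.
move=> f_f0 g_g0; apply: cvg_big => // [|x _]; first exact: add_continuous.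
apply: cvg_big => // [|y _]; first exact: add_continuous.
by apply: cvgM; [apply: cvgM; [exact: cvg_cst|exact: f_f0]|exact: g_g0].
Qed.

Lemma leq_id_increasing {phi : nat -> nat} :
  (forall k, (phi k < phi k.+1)%N) -> forall k, (k <= phi k)%N.
Proof. by move=> phi_incr; elim=> // k IHk; exact: leq_ltn_trans IHk (phi_incr k). Qed.

Lemma cvg_invn_increasing (R : realType) {phi : nat -> nat} :
  (forall k, (phi k < phi k.+1)%N) -> (fun k => (phi k)%:R^-1 : R) @ \oo --> 0.
Proof.
move=> phi_incr; have phi_ge := leq_id_increasing phi_incr.
have phi_oo : phi @ \oo --> \oo.
  by apply/cvgnyPge => A; exists A => // k /= /leq_trans; apply.
apply/cvgrVy.
  by exists 1%N => // k /= /leq_trans /(_ (phi_ge k)); rewrite invr_gt0 ltr0n.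
under eq_cvg do rewrite /= invrK.
exact/cvgrnyP.
Qed.

Section Kernel.
Variables (R : realType) (T : finType) (G : T -> T -> R).

Lemma GformE f h : Gform G f h = \sum_x f x * Gpt G x h.
Proof.
rewrite /Gform /Gpt; apply: eq_bigr => x _; rewrite mulr_sumr.
by apply: eq_bigr => y _; rewrite mulrCA mulrA.
Qed.

Lemma GformDl f g h :
  Gform G (fun z => f z + g z) h = Gform G f h + Gform G g h.
Proof. by rewrite !GformE -big_split; apply: eq_bigr => x _; rewrite mulrDl. Qed.

Lemma GformBl f g h :
  Gform G (fun z => f z - g z) h = Gform G f h - Gform G g h.
Proof. by rewrite !GformE -sumrB; apply: eq_bigr => x _; rewrite mulrBl. Qed.

Lemma GformZl c f h : Gform G (fun z => c * f z) h = c * Gform G f h.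
Proof. by rewrite !GformE mulr_sumr; apply: eq_bigr => x _; rewrite mulrA. Qed.

Lemma GformDr f g h :
  Gform G h (fun z => f z + g z) = Gform G h f + Gform G h g.
Proof.
rewrite /Gform -big_split; apply: eq_bigr => x _; rewrite -big_split.
by apply: eq_bigr => y _; rewrite mulrDr.
Qed.

Lemma GformBr f g h :
  Gform G h (fun z => f z - g z) = Gform G h f - Gform G h g.
Proof.
rewrite /Gform -sumrB; apply: eq_bigr => x _; rewrite -sumrB.
by apply: eq_bigr => y _; rewrite mulrBr.
Qed.

Lemma GformZr c f h : Gform G h (fun z => c * f z) = c * Gform G h f.
Proof.
rewrite /Gform mulr_sumr; apply: eq_bigr => x _; rewrite mulr_sumr.
by apply: eq_bigr => y _; rewrite mulrCA.
Qed.

Lemma sum_diracM (x : T) (F : T -> R) : \sum_z dirac_pt R x z * F z = F x.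
Proof.
rewrite (bigD1 x) //= big1 => [|z zx]; first by rewrite /dirac_pt eqxx mul1r addr0.
by rewrite /dirac_pt eq_sym (negbTE zx) mul0r.
Qed.

Lemma sum_dirac (x : T) : \sum_z dirac_pt R x z = 1.
Proof. by rewrite -[RHS](sum_diracM x (fun=> 1)); apply: eq_bigr => z _; rewrite mulr1. Qed.

Lemma Gform_dirac_l (x : T) h : Gform G (dirac_pt R x) h = Gpt G x h.
Proof. by rewrite GformE sum_diracM. Qed.

Lemma sum_emp_measM (a : nat -> T) n (F : T -> R) :
  \sum_x emp_meas R a n x * F x = n%:R^-1 * \sum_(j < n) F (a j).
Proof.
rewrite /emp_meas; under eq_bigr do rewrite -mulrA mulr_suml.
rewrite -mulr_sumr (exchange_big_dep xpredT) //=.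
by under [X in _ * X = _]eq_bigr do rewrite sum_diracM.
Qed.

Lemma emp_meas_prob (a : nat -> T) {n} : (0 < n)%N -> is_prob (emp_meas R a n).
Proof.
move=> n_gt0; split=> [x|].
  by rewrite mulr_ge0 ?invr_ge0 ?ler0n ?sumr_ge0 // => j _; rewrite ler0n.
transitivity (\sum_x emp_meas R a n x * 1); first by apply: eq_bigr => x _; rewrite mulr1.
by rewrite sum_emp_measM sumr_const card_ord mulVf // pnatr_eq0 -lt0n.
Qed.

Definition pair_energy (a : nat -> T) n := \sum_(i < n) \sum_(j < n) G (a i) (a j).

Lemma Gform_emp_meas (a : nat -> T) n :
  Gform G (emp_meas R a n) (emp_meas R a n) = n%:R^-1 * (n%:R^-1 * pair_energy a n).
Proof.
rewrite GformE sum_emp_measM /pair_energy; congr (_ * _); rewrite mulr_sumr.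
apply: eq_bigr => i _; rewrite -(sum_emp_measM a n (G (a i))) /Gpt.
by apply: eq_bigr => y _; rewrite mulrC.
Qed.

Lemma diag_le_max x : G x x <= diag_max G.
Proof. by apply: le_trans (ler_norm _) _; rewrite /diag_max (bigD1 x) //= le_max lexx. Qed.

Hypothesis symG : symmetric_kernel G.

Lemma Gform_sym f h : Gform G f h = Gform G h f.
Proof.
rewrite /Gform exchange_big; apply: eq_bigr => x _.
by apply: eq_bigr => y _; rewrite symG mulrAC.
Qed.

Lemma pair_energyS a n :
  pair_energy a n.+1 = pair_energy a n + 2 * \sum_(j < n) G (a n) (a j) + G (a n) (a n).
Proof.
rewrite /pair_energy big_ord_recr /=.
under eq_bigr do rewrite big_ord_recr /=.
rewrite big_split /= big_ord_recr /=.
under [\sum_(i < n) G (a i) (a n)]eq_bigr do rewrite symG.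
ring.
Qed.

Section Equilibrium.
Variable nu : T -> R.
Hypotheses (nu_pos : is_prob_pos nu) (nu_eq : equilibrium G nu).

Lemma equilibrium_Gpt_le x y : Gpt G x nu <= Gpt G y nu.
Proof.
have [nu_gt0 nu_sum] := nu_pos.
pose v z := dirac_pt R y z - dirac_pt R x z.
have v_nu : Gform G v nu = Gpt G y nu - Gpt G x nu.
  by rewrite GformBl !Gform_dirac_l.
(* Moving mass t <= nu x from x to y keeps a probability measure, and the
   energy, minimal at t = 0, changes by 2 t (Gpt y - Gpt x) + t^2 G(v, v). *)
rewrite -subr_ge0 -(pmulr_rge0 _ (ltr0Sn R 1)).
apply: (@ge0_of_quadratic_ge0_near0 _ _ (Gform G v v) (nu x)) => // t /andP[t_gt0 t_le].
pose mu z := nu z + t * v z.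
have mu_prob : is_prob mu.
  split=> [z|]; last first.
    by rewrite big_split /= -mulr_sumr sumrB !sum_dirac subrr mulr0 addr0.
  have := nu_gt0 z; rewrite /mu /v /dirac_pt.
  by case: (x =P z) => [<-|_]; case: (y == _); rewrite /= ?mulr1n ?mulr0n; lra.
clearbody v.
have := nu_eq.2 mu mu_prob.
rewrite /mu GformDl !GformDr !GformZl !GformZr (Gform_sym nu v) v_nu.
lra.
Qed.

Lemma Gpt_equilibrium x : Gpt G x nu = Gform G nu nu.
Proof.
have Gpt_cst y : Gpt G y nu = Gpt G x nu.
  by apply/le_anti; rewrite !equilibrium_Gpt_le.
rewrite GformE; under eq_bigr do rewrite Gpt_cst.
by rewrite -mulr_suml nu_pos.2 mul1r.
Qed.

Lemma Gform_equilibrium_r {mu} : \sum_x mu x = 1 -> Gform G mu nu = Gform G nu nu.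
Proof.
move=> mu_sum; rewrite GformE; under eq_bigr do rewrite Gpt_equilibrium.
by rewrite -mulr_suml mu_sum mul1r.
Qed.

Lemma Gform_sub_equilibrium {mu} : \sum_x mu x = 1 ->
  Gform G (fun x => mu x - nu x) (fun x => mu x - nu x) =
  Gform G mu mu - Gform G nu nu.
Proof.
move=> mu_sum; rewrite GformBl !GformBr (Gform_sym nu mu).
by rewrite Gform_equilibrium_r //; ring.
Qed.

Section Leja.
Variable a : nat -> T.
Hypothesis leja_a : leja G a.

Lemma leja_step_le n : \sum_(j < n) G (a n) (a j) <= n%:R * Gform G nu nu.
Proof.
case: n => [|n]; first by rewrite big_ord0 mul0r.
pose F x := \sum_(j < n.+1) G x (a j).
apply: le_trans (min_le_prob_mean (F := F) nu_eq.1 (leja_a (k := n.+1) isT)) _.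
under eq_bigr do rewrite mulr_sumr.
rewrite (exchange_big_dep xpredT) //= mulr_natl.
have -> : Gform G nu nu *+ n.+1 = \sum_(j < n.+1) Gform G nu nu.
  by rewrite sumr_const card_ord.
apply: ler_sum => j _; rewrite -(Gpt_equilibrium (a j)) /Gpt.
by under eq_bigr do rewrite symG mulrC.
Qed.

Lemma pair_energy_le n :
  pair_energy a n <= n%:R * diag_max G + n%:R * (n%:R - 1) * Gform G nu nu.
Proof.
elim: n => [|n IHn]; first by rewrite /pair_energy big_ord0 !mul0r addr0.
rewrite pair_energyS.
have := leja_step_le n; have := diag_le_max (a n).
rewrite -natr1; lra.
Qed.

Lemma leja_energy_bound n : (0 < n)%N ->
  Gform G (fun x => emp_meas R a n x - nu x) (fun x => emp_meas R a n x - nu x)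
    <= n%:R^-1 * (diag_max G - Gform G nu nu).
Proof.
move=> n_gt0; rewrite (Gform_sub_equilibrium (emp_meas_prob a n_gt0).2).
rewrite Gform_emp_meas.
have ninv_gt0 : 0 < n%:R^-1 :> R by rewrite invr_gt0 ltr0n.
have := pair_energy_le n; rewrite -(ler_pM2l ninv_gt0) -(ler_pM2l ninv_gt0).
have -> : n%:R^-1 * (n%:R^-1 * (n%:R * diag_max G + n%:R * (n%:R - 1) * Gform G nu nu))
    = n%:R^-1 * (diag_max G - Gform G nu nu) + Gform G nu nu.
  by field; rewrite pnatr_eq0 -lt0n.
lra.
Qed.

Lemma leja_limit_equilibrium (phi : nat -> nat) (mu : T -> R) :
  (forall k, (phi k < phi k.+1)%N) ->
  (forall x, (fun k => emp_meas R a (phi k) x) @ \oo --> mu x) ->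
  equilibrium G mu.
Proof.
move=> phi_incr sigma_mu.
have phi_gt0 : \forall k \near \oo, (0 < phi k)%N.
  by exists 1%N => // k /= k_gt0; exact: leq_trans k_gt0 (leq_id_increasing phi_incr k).
have mu_prob : is_prob mu.
  apply: (cvg_is_prob (f := fun k => emp_meas R a (phi k)) sigma_mu).
  by apply: filterS phi_gt0 => k; exact: emp_meas_prob.
split=> // lambda lambda_prob; apply: le_trans (nu_eq.2 lambda lambda_prob).
rewrite -subr_le0 -(Gform_sub_equilibrium mu_prob.2).
pose diff k x := emp_meas R a (phi k) x - nu x.
have diff_cvg x : diff ^~ x @ \oo --> mu x - nu x.
  exact: cvgB (sigma_mu x) (cvg_cst _).
have bound_cvg :
    (fun k => (phi k)%:R^-1 * (diag_max G - Gform G nu nu)) @ \oo --> 0.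
  rewrite -(mul0r (diag_max G - Gform G nu nu)).
  exact: cvgM (cvg_invn_increasing phi_incr) (cvg_cst _).
apply: (ler_cvg_to (cvg_Gform (G := G) diff_cvg diff_cvg) bound_cvg).
by apply: filterS phi_gt0 => k; exact: leja_energy_bound.
Qed.

End Leja.
End Equilibrium.
End Kernel.

Theorem theorem5p1 (R : realType) (T : finType) (G : T -> T -> R)
  (nustar : T -> R) (a : nat -> T) :
  symmetric_kernel G -> cond_psd G ->
  is_prob_pos nustar -> equilibrium G nustar ->
  leja G a ->
  (forall n : nat, (1 <= n)%N ->
     Gform G (fun x => emp_meas R a n x - nustar x)
             (fun x => emp_meas R a n x - nustar x)
     <= n%:R^-1 * (diag_max G - Gform G nustar nustar))
  /\
  (forall (phi : nat -> nat) (mu : T -> R),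
     (forall k, (phi k < phi k.+1)%N) ->
     (forall x : T, (fun k => emp_meas R a (phi k) x) @ \oo --> mu x) ->
     equilibrium G mu).
Proof.
move=> symG _ nu_pos nu_eq leja_a; split.
  exact: leja_energy_bound.
exact: (leja_limit_equilibrium symG nu_pos nu_eq leja_a).
Qed.
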